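(* Suppose that $n=2^i(2k+1)$, where $i\ge 1$ and $k\ge 0$ are integers. Then: (1) if $i=1$, then $(n-1)!!\equiv 2k+1 \pmod n$; (2) if $i=2$, then $(n-1)!!\equiv -(2k+1)^2 \pmod n$; (3) if $i>2$, then $(n-1)!!\equiv (2k+1)^{2^{i-2}} \pmod n$.
   Context: For a natural number $m$, the double factorial $m!!$ is the product of the natural numbers less than or equal to $m$ that have the same parity as $m$; thus for even $n$, $(n-1)!!$ is the product of all odd natural numbers less than $n$. *)

From mathcomp Require Import all_boot all_order all_algebra.
Set Implicit Arguments. Unset Strict Implicit. Unset Printing Implicit Defensive.

Fixpoint dfact (m : nat) : nat :=
  match m with
  | 0 => 1
  | 1 => 1
  | (m'.+2) as p => p * dfact m'
  end.

From mathcomp Require Import all_boot all_order all_algebra.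
From mathcomp Require Import zify ring.
Import GRing.Theory Num.Theory.
Local Open Scope ring_scope.

(* With n = 2M m, M = 2^(i-1) and m = 2k+1 odd, (n-1)!! is the product of the
   first Mm odd numbers. Modulo m it vanishes, since m is one of its factors.
   Modulo 2M it splits into m blocks of M consecutive odd numbers, each
   congruent to the first block, so it is the m-th power of the product P_M of
   the first M odd numbers. Pairing t with 4M - t shows P_(2M) = (-1)^M P_M^2
   mod 4M, so P_(2^j) = 1 mod 2^(j+1) for j >= 2, while P_1 = 1 and P_2 = 3.
   Odd squares are 1 mod 8, and squaring doubles the 2-adic precision of a
   congruence x = 1; the three cases then follow by the Chinese remainder
   theorem. *)

Lemma eqz_modM d a b c e :
  (a = b %[mod d])%Z -> (c = e %[mod d])%Z -> (a * c = b * e %[mod d])%Z.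
Proof. by move=> hab hce; rewrite -modzMm hab hce modzMm. Qed.

Lemma eqz_mod_prod d N (f g : 'I_N -> int) :
  (forall t, (f t = g t %[mod d])%Z) ->
  (\prod_(t < N) f t = \prod_(t < N) g t %[mod d])%Z.
Proof.
by move=> hfg; apply: (big_ind2 (fun a b => a = b %[mod d])%Z) => //; apply: eqz_modM.
Qed.

Lemma eqz_mod_dvdl d d' a b :
  (d' %| d)%Z -> (a = b %[mod d])%Z -> (a = b %[mod d'])%Z.
Proof.
move=> hd /eqP; rewrite eqz_mod_dvd => /(dvdz_trans hd) hab.
by apply/eqP; rewrite eqz_mod_dvd.
Qed.

Lemma eqz_mod_coprimeM d e a b : coprimez d e ->
  (e %| a)%Z -> (e %| b)%Z -> (a = b %[mod d])%Z -> (a = b %[mod d * e])%Z.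
Proof.
move=> cde ea eb /eqP; rewrite !eqz_mod_dvd => dab; apply/eqP.
by rewrite eqz_mod_dvd Gauss_dvdz // dab rpredB.
Qed.

Lemma PoszX (m n : nat) : (m ^ n)%N%:Z = m%:Z ^+ n.
Proof. by rewrite -!natz natrX. Qed.

Lemma eqz_mod_nat (n a b : nat) :
  (a%:Z = b%:Z %[mod n%:Z])%Z -> (a = b %[mod n])%N.
Proof. by rewrite !modz_nat => -[]. Qed.

Lemma sqr_eqz_mod2X a x :
  (x = 1 %[mod 2 ^+ a.+1])%Z -> (x ^+ 2 = 1 %[mod 2 ^+ a.+2])%Z.
Proof.
move/eqP; rewrite !eqz_mod_dvd => /dvdzP [q hq]; apply/eqP; rewrite eqz_mod_dvd.
apply/dvdzP; exists (q * (q * 2 ^+ a + 1)).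
have -> : x = q * 2 ^+ a.+1 + 1 by rewrite -hq; ring.
by rewrite !exprS; ring.
Qed.

Lemma odd_sqr_mod8 (k : nat) : ((2 * k%:Z + 1) ^+ 2 = 1 %[mod 8])%Z.
Proof.
apply/eqP; rewrite eqz_mod_dvd; apply/dvdzP; exists 'C(k.+1, 2)%:Z.
have hC : 2 * 'C(k.+1, 2)%:Z = k.+1%:Z * k%:Z.
  by rewrite -!PoszM -mul_bin_diag bin1.
have -> : 'C(k.+1, 2)%:Z * 8 = 2 * 'C(k.+1, 2)%:Z * 4 by ring.
by rewrite hC; ring.
Qed.

Lemma odd_expX_mod2X (k a : nat) :
  ((2 * k%:Z + 1) ^+ (2 ^ a.+1) = 1 %[mod 2 ^+ a.+3])%Z.
Proof.
elim: a => [|a IH]; first exact: odd_sqr_mod8.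
by rewrite expnS mulnC exprM; apply: sqr_eqz_mod2X.
Qed.

Definition odd_prod (N : nat) : int := \prod_(t < N) (2 * (t : nat)%:Z + 1).

Lemma dfact_odd_prod N : (dfact (2 * N).-1)%:Z = odd_prod N.
Proof.
elim: N => [|N IH]; first by rewrite /odd_prod big_ord0.
have -> : (2 * N.+1).-1 = (2 * N).+1 by lia.
have -> : dfact (2 * N).+1 = ((2 * N).+1 * dfact (2 * N).-1)%N by case: N {IH}.
by rewrite PoszM IH /odd_prod big_ord_recr /= mulrC; congr (_ * _); lia.
Qed.

Lemma odd_prodD a b :
  odd_prod (a + b) = odd_prod a * \prod_(t < b) (2 * (a + t)%:Z + 1).
Proof. by rewrite /odd_prod big_split_ord. Qed.

Lemma odd_prod_blocks M j : (odd_prod (M * j) = odd_prod M ^+ j %[mod 2 * M%:Z])%Z.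
Proof.
elim: j => [|j IH]; first by rewrite muln0 /odd_prod big_ord0.
rewrite mulnS addnC odd_prodD exprSr; apply: eqz_modM => //.
apply: eqz_mod_prod => t.
have -> : 2 * (M * j + t)%:Z + 1 = j%:Z * (2 * M%:Z) + (2 * t%:Z + 1).
  by rewrite PoszD PoszM; ring.
exact: modzMDl.
Qed.

(* The t-th factor of the second half is 4M minus the (M-1-t)-th one. *)
Lemma odd_prod_double M :
  (odd_prod (M + M) = (-1) ^+ M * odd_prod M ^+ 2 %[mod 4 * M%:Z])%Z.
Proof.
rewrite odd_prodD expr2 mulrCA; apply: eqz_modM => //.
rewrite (reindex_inj rev_ord_inj) /= /odd_prod.
have -> : (-1) ^+ M * \prod_(t < M) (2 * (t : nat)%:Z + 1) =
          \prod_(t < M) - (2 * (t : nat)%:Z + 1) by rewrite prodrN card_ord.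
apply: eqz_mod_prod => t; have ht := ltn_ord t.
have -> : 2 * (M + (M - t.+1)%N)%:Z + 1 = 1 * (4 * M%:Z) + - (2 * t%:Z + 1) by lia.
exact: modzMDl.
Qed.

Lemma odd_prod_pow2 a : (odd_prod (2 ^ a.+2) = 1 %[mod 2 ^+ a.+3])%Z.
Proof.
elim: a => [|a IH]; first by rewrite /odd_prod !big_ord_recr big_ord0.
have hM : 2 ^+ a.+4 = 4 * (2 ^ a.+2)%N%:Z :> int by rewrite PoszX !exprS; ring.
rewrite expnS mul2n -addnn hM (odd_prod_double (2 ^ a.+2)) -hM.
by rewrite -signr_odd oddX /= mul1r; apply: sqr_eqz_mod2X.
Qed.

Lemma dvdz_odd_prod k N : (k < N)%N -> ((2 * k + 1)%N%:Z %| odd_prod N)%Z.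
Proof.
move=> hk; rewrite /odd_prod (bigD1 (Ordinal hk)) //=.
by apply: dvdz_mulr; rewrite PoszD PoszM.
Qed.

Lemma dfact_pred_mod j k (T : int) :
  let m := (2 * k + 1)%N in
  (m%:Z %| T)%Z -> (odd_prod (2 ^ j) ^+ m = T %[mod 2 ^+ j.+1])%Z ->
  ((dfact (2 ^ j.+1 * m).-1)%:Z = T %[mod (2 ^ j.+1 * m)%N%:Z])%Z.
Proof.
move=> m mT hT; have hM : 2 ^+ j.+1 = 2 * (2 ^ j)%N%:Z :> int.
  by rewrite PoszX exprS.
rewrite expnS -mulnA dfact_odd_prod.
have -> : (2 * (2 ^ j * m))%N%:Z = 2 ^+ j.+1 * m%:Z by rewrite hM mulnA !PoszM.
apply: eqz_mod_coprimeM => //.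
- by apply: coprimezXl; rewrite coprimezE coprime2n /m oddD oddM.
- have := expn_gt0 2 j; rewrite /m => hj.
  by apply: dvdz_odd_prod; nia.
- by rewrite hM odd_prod_blocks -hM.
Qed.

Local Close Scope ring_scope.
Theorem theorem14 (i k : nat) (hi : 1 <= i) :
  let n := 2 ^ i * (2 * k + 1) in
  [/\ (i = 1 -> (dfact n.-1 = (2 * k + 1) %[mod n])%N),
      (i = 2 -> ((dfact n.-1)%:Z = - ((2 * k + 1) ^ 2)%:Z %[mod n%:Z])%Z) &
      (2 < i -> (dfact n.-1 = (2 * k + 1) ^ (2 ^ (i - 2)) %[mod n])%N)].
Proof.
Local Open Scope ring_scope.
case: i hi => // j _ n; rewrite {}/n.
have mz : (2 * k + 1)%N%:Z = 2 * k%:Z + 1 by rewrite PoszD PoszM.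
split=> [-> | -> | hj].
- apply/eqz_mod_nat/dfact_pred_mod => //.
  by rewrite /odd_prod big_ord1 expr1n mz expr1 mulrC modzMDl.
- apply: (dfact_pred_mod 1); first by rewrite rpredN dvdzE /= dvdn_exp.
  have h3 : odd_prod 2 = 1 * 4 + (-1) by rewrite /odd_prod !big_ord_recr big_ord0.
  have h8 : (((2 * k + 1) ^ 2)%N%:Z = 1 %[mod 4])%Z.
    by rewrite PoszX mz; apply: eqz_mod_dvdl (odd_sqr_mod8 k).
  rewrite h3 -modzXm modzMDl modzXm -signr_odd oddD oddM /= expr1.
  by rewrite -modzNm h8 modzNm.
- have [a ->] : exists a, j = a.+2 by exists j.-2; lia.
  apply/eqz_mod_nat/dfact_pred_mod; first by rewrite dvdzE /= dvdn_exp ?expn_gt0.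
  rewrite -modzXm odd_prod_pow2 modzXm expr1n PoszX mz.
  have -> : (a.+3 - 2 = a.+1)%N by lia.
  exact: esym (odd_expX_mod2X k a).
Qed.
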